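(* For any pairwise distinct complex numbers $x_1,\dots,x_M$ and any function $f$ for which the expressions are defined, $$\mathcal A^{\pm}_{\{x\}}[f]=\mathcal A^{\mp}_{\{x\}}\!\left[-\frac{E^\pm_{\{x\}}}{E^\mp_{\{x\}}}f\right].$$
   Context: Let $\eta\in\mathbb C\setminus\{0\}$. For a family $\{x\}=\{x_1,\dots,x_M\}$ of complex numbers and $y\in\mathbb C$, $E^\pm_{\{x\}}(y)=\prod_{n=1}^M\frac{y-x_n\pm\eta}{y-x_n}$; at $y=x_m$ the ratio $E^\pm_{\{x\}}(x_m)/E^\mp_{\{x\}}(x_m)$ means $\prod_{n=1}^M\frac{x_m-x_n\pm\eta}{x_m-x_n\mp\eta}$ (the factor $n=m$ equals $-1$). With $V(x_1,\dots,x_M)=\prod_{1\le b<a\le M}(x_a-x_b)$ and $f$ a function defined at the $x_a$, $\mathcal A^\pm_{\{x\}}[f]=\det_{1\le a,b\le M}\big[x_a^{b-1}-f(x_a)(x_a\pm\eta)^{b-1}\big]/V(x_1,\dots,x_M)$. Here $-\frac{E^\pm_{\{x\}}}{E^\mp_{\{x\}}}f$ denotes the function $x_a\mapsto-\frac{E^\pm_{\{x\}}(x_a)}{E^\mp_{\{x\}}(x_a)}f(x_a)$. *)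

From HB Require Import structures.
From mathcomp Require Import all_boot all_order all_algebra.
From mathcomp Require Import complex.
From mathcomp Require Import Rstruct.
Set Implicit Arguments. Unset Strict Implicit. Unset Printing Implicit Defensive.
Import Order.TTheory GRing.Theory Num.Theory.
Local Open Scope ring_scope.

Notation CC := (complex Rdefinitions.R).

(* Sign convention: pm = true stands for the upper sign "+", pm = false for "-". *)
Definition pmsign (pm : bool) : CC := if pm then 1 else -1.

(* E^{pm}_{x}(y) / E^{-pm}_{x}(y), written as the product
   prod_n (y - x_n + pm eta)/(y - x_n - pm eta); at y = x_m this is exactly the
   convention of the paper (the factor n = m equals -1). *)
Definition Eratio (pm : bool) (eta : CC) (M : nat) (x : 'I_M -> CC) (y : CC) : CC :=
  \prod_(n < M) ((y - x n + pmsign pm * eta) / (y - x n - pmsign pm * eta)).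

Definition Vand (M : nat) (x : 'I_M -> CC) : CC :=
  \prod_(a < M) \prod_(b < M | (b < a)%N) (x a - x b).

(* A^{pm}_{x}[f] = det [x_a^{b-1} - f(x_a) (x_a pm eta)^{b-1}]_{a,b} / V(x).
   (0-based column index b here corresponds to exponent b-1 for 1-based b.) *)
Definition Aop (pm : bool) (eta : CC) (M : nat) (x : 'I_M -> CC) (f : CC -> CC) : CC :=
  \det (\matrix_(a < M, b < M) (x a ^+ b - f (x a) * (x a + pmsign pm * eta) ^+ b))
  / Vand x.

(* Expanding the determinant row by row, A^±[f] becomes a sum over subsets S
   of the rows of ∏_{a∈S} (-f(x_a)) times the Vandermonde determinant of the
   nodes x_a ± η (a ∈ S), x_a (a ∉ S); likewise for the right-hand side with
   the nodes shifted by ∓η.  The two sums agree term by term: for a pair of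
   rows in S the shifts cancel in x_a - x_n while the two factors of
   E^±/E^∓ at x_a and at x_n are mutually inverse; for a ∈ S, n ∉ S the
   factor (x_a - x_n ± η)/(x_a - x_n ∓ η) of E^±/E^∓(x_a) turns one shifted
   difference into the other; and the diagonal factor -1 of E^±/E^∓(x_a)
   absorbs the sign of -f. *)
From HB Require Import structures.
From mathcomp Require Import all_boot all_order all_algebra.
From mathcomp Require Import complex.
From mathcomp Require Import Rstruct.
From mathcomp Require Import ring perm.
Import Order.TTheory GRing.Theory Num.Theory.
Local Open Scope ring_scope.

Section VandermondeExpansion.

Context {R : comPzRingType}.

Definition vandermonde {M : nat} (w : 'I_M -> R) : R :=
  \prod_(i < M) \prod_(j < M | (i < j)%N) (w j - w i).

Lemma det_powers (M : nat) (w : 'I_M -> R) :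
  \det (\matrix_(a < M, b < M) (w a ^+ b)) = vandermonde w.
Proof.
rewrite -det_tr.
transitivity (\det (Vandermonde M (\row_(j < M) w j))).
  by congr (\det _); apply/matrixP => i j; rewrite !mxE.
by rewrite det_Vandermonde; apply: eq_bigr => i _; apply: eq_bigr => j _; rewrite !mxE.
Qed.

Lemma det_add_scaled_powers (M : nat) (u v c : 'I_M -> R) :
  \det (\matrix_(a < M, b < M) (u a ^+ b + c a * v a ^+ b)) =
  \sum_(S : {ffun 'I_M -> bool})
     (\prod_(i < M) (if S i then c i else 1)) *
     vandermonde (fun a => if S a then v a else u a).
Proof.
under [in RHS]eq_bigr do rewrite -det_powers.
rewrite /determinant.
transitivity (\sum_(s : 'S_M) \sum_(S : {ffun 'I_M -> bool}) ((-1) ^+ s *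
   \prod_i (if S i then c i * v i ^+ s i else u i ^+ s i))).
  apply: eq_bigr => s _; rewrite -mulr_sumr.
  rewrite -(bigA_distr_bigA (fun i (b : bool) =>
              if b then c i * v i ^+ s i else u i ^+ s i)).
  by congr (_ * _); apply: eq_bigr => i _; rewrite big_bool /= mxE addrC.
rewrite exchange_big /=; apply: eq_bigr => S _.
rewrite mulr_sumr; apply: eq_bigr => s _.
rewrite mulrCA; congr (_ * _).
rewrite -big_split /=; apply: eq_bigr => i _.
by rewrite mxE; case: (S i); rewrite ?mul1r.
Qed.

Lemma prod_diag_pairs (M : nat) (F : 'I_M -> 'I_M -> R) :
  \prod_(i < M) \prod_(j < M) F i j =
  \prod_(i < M) F i i * \prod_(i < M) \prod_(j < M | (i < j)%N) (F i j * F j i).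
Proof.
under [X in _ = _ * X]eq_bigr do rewrite big_split.
rewrite big_split /= mulrCA.
have -> : \prod_(i < M) \prod_(j < M | (i < j)%N) F j i =
          \prod_(i < M) \prod_(j < M | (j < i)%N) F i j.
  under eq_bigr do rewrite big_mkcond.
  by rewrite exchange_big /=; apply: eq_bigr => i _; rewrite [RHS]big_mkcond.
rewrite -!big_split /=; apply: eq_bigr => i _.
have -> : F i i = \prod_(j < M | j == i) F i j by rewrite big_pred1_eq.
rewrite [X in _ = X * _]big_mkcond [X in _ = _ * (X * _)]big_mkcond.
rewrite [X in _ = _ * (_ * X)]big_mkcond -!big_split /=; apply: eq_bigr => j _.
have [->|ji] := eqVneq j i; first by rewrite ltnn mul1r mulr1.
by case: ltngtP ji => [||/val_inj ->]; rewrite ?eqxx ?mul1r ?mulr1.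
Qed.

End VandermondeExpansion.

Section ShiftedNodes.

Context {F : fieldType} {M : nat} {x : 'I_M -> F} {e : F}.
Hypothesis x_sub_e_neq0 : forall m n, x m - x n - e != 0.

Definition shift_ratio (a : 'I_M) : F :=
  \prod_(n < M) ((x a - x n + e) / (x a - x n - e)).

Lemma shift_pair_factor (Si Sj : bool) (i j : 'I_M) :
  (if Si then (x i - x j + e) / (x i - x j - e) else 1) *
  (if Sj then (x j - x i + e) / (x j - x i - e) else 1) *
  ((if Sj then x j - e else x j) - (if Si then x i - e else x i)) =
  (if Sj then x j + e else x j) - (if Si then x i + e else x i).
Proof.
have nij := x_sub_e_neq0 i j; have nji := x_sub_e_neq0 j i.
have nij' : x i - x j + e != 0.
  by rewrite -oppr_eq0 (_ : - (x i - x j + e) = x j - x i - e) //; ring.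
by case: Si; case: Sj; rewrite ?mul1r ?mulr1 //; field; rewrite ?nij ?nji ?nij'.
Qed.

Lemma vandermonde_shift_flip (S : {ffun 'I_M -> bool}) :
  \prod_(i < M) (if S i then -1 else 1) *
    vandermonde (fun a => if S a then x a + e else x a) =
  \prod_(i < M) (if S i then shift_ratio i else 1) *
    vandermonde (fun a => if S a then x a - e else x a).
Proof.
have -> : \prod_(i < M) (if S i then shift_ratio i else 1) =
    \prod_(i < M) \prod_(n < M)
      (if S i then (x i - x n + e) / (x i - x n - e) else 1).
  by apply: eq_bigr => i _; case: (S i); rewrite ?big1_eq.
rewrite prod_diag_pairs.
have -> : \prod_(i < M) (if S i then (x i - x i + e) / (x i - x i - e) else 1) =
          \prod_(i < M) (if S i then -1 else 1).
  apply: eq_bigr => i _; case: (S i) => //.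
  have := x_sub_e_neq0 i i.
  by rewrite subrr !add0r oppr_eq0 invrN mulrN => /divff ->.
rewrite -mulrA; congr (_ * _).
rewrite /vandermonde -big_split /=; apply: eq_bigr => i _.
by rewrite -big_split /=; apply: eq_bigr => j _; rewrite shift_pair_factor.
Qed.

Lemma det_shift_flip (c : 'I_M -> F) :
  \det (\matrix_(a < M, b < M) (x a ^+ b - c a * (x a + e) ^+ b)) =
  \det (\matrix_(a < M, b < M) (x a ^+ b + shift_ratio a * c a * (x a - e) ^+ b)).
Proof.
have -> : \matrix_(a < M, b < M) (x a ^+ b - c a * (x a + e) ^+ b) =
          \matrix_(a < M, b < M) (x a ^+ b + (- c a) * (x a + e) ^+ b).
  by apply/matrixP => a b; rewrite !mxE mulNr.
rewrite !det_add_scaled_powers; apply: eq_bigr => S _.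
have prod_if_split (d : 'I_M -> F) :
    \prod_(i < M) (if S i then d i * c i else 1) =
    \prod_(i < M) (if S i then d i else 1) * \prod_(i < M) (if S i then c i else 1).
  by rewrite -big_split; apply: eq_bigr => i _ /=; case: (S i); rewrite ?mulr1.
under eq_bigr do rewrite -mulN1r.
rewrite !prod_if_split mulrAC [RHS]mulrAC.
by rewrite vandermonde_shift_flip.
Qed.

End ShiftedNodes.

Lemma pmsignN (pm : bool) : pmsign (~~ pm) = - pmsign pm.
Proof. by case: pm; rewrite /= ?opprK. Qed.

Theorem mainTheorem5 (pm : bool) (eta : CC) (M : nat) (x : 'I_M -> CC) (f : CC -> CC) :
  eta != 0 ->
  injective x ->
  (* the expressions are defined: no denominator x_m - x_n -/+ eta vanishes *)
  (forall m n : 'I_M, x m - x n != eta) ->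
  Aop pm eta x f =
  Aop (~~ pm) eta x (fun y => - Eratio pm eta x y * f y).
Proof.
move=> _ _ x_sub_neq_eta.
have x_sub_e_neq0 m n : x m - x n - pmsign pm * eta != 0.
  case: pm; rewrite /pmsign ?mul1r ?mulN1r ?subr_eq0 ?x_sub_neq_eta //.
  apply: contra (x_sub_neq_eta n m) => /eqP eq_eta; apply/eqP.
  by rewrite -[x n - x m]opprB -[eta]opprK -eq_eta; ring.
rewrite /Aop (det_shift_flip x_sub_e_neq0 (fun a => f (x a))); congr (\det _ / _).
apply/matrixP => a b; rewrite !mxE pmsignN mulNr; congr (_ + _).
by rewrite mulNr opprK (mulNr (pmsign pm)) /shift_ratio /Eratio.
Qed.
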